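(* Let $\mathcal K$ be a finitely complete 2-category with a good yoneda structure. Let $C$ be small, $i:M\to\mathcal PC$ and $f:C\to A$ with $M$ and $f$ admissible, and let $p:y_C/i\to C$, $q:y_C/i\to M$, $\lambda:y_Cp\Rightarrow iq$ be the lax pullback of $y_C$ and $i$. Let $k:M\to A$, let $\eta:i\Rightarrow A(f,1)k$ be a 2-cell and $\eta':fp\Rightarrow kq$ the corresponding 2-cell, i.e. the unique one with $(A(f,1)\eta')\cdot(\chi^fp)=(\eta q)\cdot\lambda$. Then: (1) $\eta$ exhibits $k$ as a left lifting of $i$ along $A(f,1)$ iff $\eta'$ exhibits $k$ as a left extension of $fp$ along $q$; (2) $\eta$ exhibits $k$ as an absolute left lifting of $i$ along $A(f,1)$ iff $\eta'$ exhibits $k$ as a pointwise left extension of $fp$ along $q$.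
   Context: For $f:A\to B$, $g:C\to B$ the lax pullback $f/g$ has projections $p:f/g\to A$, $q:f/g\to C$ and universal 2-cell $\lambda:fp\Rightarrow gq$. Given $f:A\to C$, $g:A\to B$, $h:B\to C$, a 2-cell $\phi:f\Rightarrow hg$ exhibits $h$ as a left extension of $f$ along $g$ if for every $k:B\to C$, $\kappa\mapsto(\kappa g)\cdot\phi$ is a bijection from 2-cells $h\Rightarrow k$ to 2-cells $f\Rightarrow kg$; it exhibits $g$ as a left lifting of $f$ along (through) $h$ if for every $k:A\to B$, $\kappa\mapsto(h\kappa)\cdot\phi$ is a bijection from 2-cells $g\Rightarrow k$ to 2-cells $f\Rightarrow hk$; the lifting is absolute if $\phi j$ exhibits $gj$ as a left lifting of $fj$ along $h$ for all $j:D\to A$. $\phi$ exhibits $h$ as a pointwise left extension of $f$ along $g$ if for every $c:X\to B$, with lax pullback $p:g/c\to A$, $q:g/c\to X$, $\lambda:gp\Rightarrow cq$, $(h\lambda)\cdot(\phi p)$ exhibits $hc$ as a left extension of $fp$ along $q$. A good yoneda structure: a class of admissible 1-cells with $fg$ admissible whenever $f$ is; $A$ admissible when $1_A$ is; for admissible $A$ an object $\mathcal PA$ and admissible $y_A:A\to\mathcal PA$; for $f:A\to B$ with $A$, $f$ admissible a 1-cell $B(f,1):B\to\mathcal PA$ and 2-cell $\chi^f:y_A\Rightarrow B(f,1)f$; such that (i) $\chi^f$ exhibits $f$ as an absolute left lifting of $y_A$ through $B(f,1)$; (ii) if $A$, $f:A\to B$ admissible and $\psi:y_A\Rightarrow gf$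 exhibits $f$ as an absolute left lifting of $y_A$ along $g$, then $\psi$ exhibits $g$ as a pointwise left extension of $y_A$ along $f$. $C$ is small if $C$ and $\mathcal PC$ are admissible. In this setting $\lambda$ exhibits $i$ as a left extension of $y_Cp$ along $q$ and $\chi^f$ is a left lifting, so the defining equation gives a bijection $\eta\mapsto\eta'$ between 2-cells $i\Rightarrow A(f,1)k$ and 2-cells $fp\Rightarrow kq$. *)

(* strict 2-categories presented essentially-algebraically
   (objects, 1-cells, 2-cells as plain types with source/target maps and
   total composition operations whose axioms hold on composable pairs). *)

Set Implicit Arguments.

Record TwoCat := {
  Ob : Type;
  Mor : Type;
  Cell : Type;
  dom : Mor -> Ob;
  cod : Mor -> Ob;
  src : Cell -> Mor;
  tgt : Cell -> Mor;
  idm : Ob -> Mor;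
  comp : Mor -> Mor -> Mor;          (* comp g f = g o f *)
  idc : Mor -> Cell;
  vcomp : Cell -> Cell -> Cell;      (* vcomp b a = b . a (vertical) *)
  hcomp : Cell -> Cell -> Cell;      (* hcomp b a = b * a (horizontal) *)
  dom_idm : forall A, dom (idm A) = A;
  cod_idm : forall A, cod (idm A) = A;
  dom_comp : forall f g, cod f = dom g -> dom (comp g f) = dom f;
  cod_comp : forall f g, cod f = dom g -> cod (comp g f) = cod g;
  comp_idl : forall f, comp (idm (cod f)) f = f;
  comp_idr : forall f, comp f (idm (dom f)) = f;
  comp_assoc : forall f g h, cod f = dom g -> cod g = dom h ->
      comp h (comp g f) = comp (comp h g) f;
  dom_par : forall a, dom (src a) = dom (tgt a);
  cod_par : forall a, cod (src a) = cod (tgt a);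
  src_idc : forall f, src (idc f) = f;
  tgt_idc : forall f, tgt (idc f) = f;
  src_vcomp : forall a b, tgt a = src b -> src (vcomp b a) = src a;
  tgt_vcomp : forall a b, tgt a = src b -> tgt (vcomp b a) = tgt b;
  src_hcomp : forall a b, cod (src a) = dom (src b) ->
      src (hcomp b a) = comp (src b) (src a);
  tgt_hcomp : forall a b, cod (src a) = dom (src b) ->
      tgt (hcomp b a) = comp (tgt b) (tgt a);
  vcomp_idl : forall a, vcomp (idc (tgt a)) a = a;
  vcomp_idr : forall a, vcomp a (idc (src a)) = a;
  vcomp_assoc : forall a b c, tgt a = src b -> tgt b = src c ->
      vcomp c (vcomp b a) = vcomp (vcomp c b) a;
  hcomp_idl : forall a, hcomp (idc (idm (cod (src a)))) a = a;
  hcomp_idr : forall a, hcomp a (idc (idm (dom (src a)))) = a;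
  hcomp_assoc : forall a b c, cod (src a) = dom (src b) ->
      cod (src b) = dom (src c) ->
      hcomp c (hcomp b a) = hcomp (hcomp c b) a;
  hcomp_idc : forall f g, cod f = dom g -> hcomp (idc g) (idc f) = idc (comp g f);
  interchange : forall a a' b b', tgt a = src a' -> tgt b = src b' ->
      cod (src a) = dom (src b) ->
      hcomp (vcomp b' b) (vcomp a' a) = vcomp (hcomp b' a') (hcomp b a)
}.

Arguments dom {K} f : rename.
Arguments cod {K} f : rename.
Arguments src {K} a : rename.
Arguments tgt {K} a : rename.
Arguments idm {K} A : rename.
Arguments comp {K} g f : rename.
Arguments idc {K} f : rename.
Arguments vcomp {K} b a : rename.
Arguments hcomp {K} b a : rename.

Section TwoCatDefs.
Variable K : TwoCat.

Definition is1cell (f : Mor K) (A B : Ob K) : Prop := dom f = A /\ cod f = B.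
Definition is2cell (a : Cell K) (f g : Mor K) : Prop := src a = f /\ tgt a = g.

Definition whiskerL (g : Mor K) (a : Cell K) : Cell K := hcomp (idc g) a.
Definition whiskerR (a : Cell K) (f : Mor K) : Cell K := hcomp a (idc f).

(* f : A -> C, g : A -> B, h : B -> C, phi : f => h g.
   phi exhibits h as a left extension of f along g. *)
Definition LeftExt (f g h : Mor K) (phi : Cell K) : Prop :=
  forall k : Mor K, is1cell k (cod g) (cod h) ->
  forall b : Cell K, is2cell b f (comp k g) ->
  exists! kap : Cell K, is2cell kap h k /\ vcomp (whiskerR kap g) phi = b.

Definition LeftLift (f g h : Mor K) (phi : Cell K) : Prop :=
  forall k : Mor K, is1cell k (dom g) (cod g) ->
  forall b : Cell K, is2cell b f (comp h k) ->
  exists! kap : Cell K, is2cell kap g k /\ vcomp (whiskerL h kap) phi = b.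

Definition AbsLeftLift (f g h : Mor K) (phi : Cell K) : Prop :=
  forall j : Mor K, cod j = dom g ->
  LeftLift (comp f j) (comp g j) h (whiskerR phi j).

Definition is_comma (f g : Mor K) (P : Ob K) (p q : Mor K) (lam : Cell K) : Prop :=
  cod f = cod g /\
  is1cell p P (dom f) /\ is1cell q P (dom g) /\
  is2cell lam (comp f p) (comp g q) /\
  (forall (X : Ob K) (a c : Mor K) (th : Cell K),
     is1cell a X (dom f) -> is1cell c X (dom g) ->
     is2cell th (comp f a) (comp g c) ->
     exists! u : Mor K, is1cell u X P /\ comp p u = a /\ comp q u = c /\
                        whiskerR lam u = th) /\
  (forall (X : Ob K) (u v : Mor K) (al be : Cell K),
     is1cell u X P -> is1cell v X P ->
     is2cell al (comp p u) (comp p v) -> is2cell be (comp q u) (comp q v) ->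
     vcomp (whiskerL g be) (whiskerR lam u) = vcomp (whiskerR lam v) (whiskerL f al) ->
     exists! ga : Cell K, is2cell ga u v /\ whiskerL p ga = al /\ whiskerL q ga = be).

Definition is_pullback (f g : Mor K) (P : Ob K) (p q : Mor K) : Prop :=
  cod f = cod g /\
  is1cell p P (dom f) /\ is1cell q P (dom g) /\ comp f p = comp g q /\
  (forall (X : Ob K) (a c : Mor K),
     is1cell a X (dom f) -> is1cell c X (dom g) -> comp f a = comp g c ->
     exists! u : Mor K, is1cell u X P /\ comp p u = a /\ comp q u = c) /\
  (forall (X : Ob K) (u v : Mor K) (al be : Cell K),
     is1cell u X P -> is1cell v X P ->
     is2cell al (comp p u) (comp p v) -> is2cell be (comp q u) (comp q v) ->
     whiskerL f al = whiskerL g be ->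
     exists! ga : Cell K, is2cell ga u v /\ whiskerL p ga = al /\ whiskerL q ga = be).

Definition is_terminal (T : Ob K) : Prop :=
  (forall X : Ob K, exists! t : Mor K, is1cell t X T) /\
  (forall (X : Ob K) (t t' : Mor K), is1cell t X T -> is1cell t' X T ->
     exists! a : Cell K, is2cell a t t').

(* Finite completeness: terminal object, pullbacks and comma objects
   (these generate all finite weighted 2-limits). *)
Definition finitely_complete : Prop :=
  (exists T : Ob K, is_terminal T) /\
  (forall f g : Mor K, cod f = cod g ->
     exists P p q, is_pullback f g P p q) /\
  (forall f g : Mor K, cod f = cod g ->
     exists P p q lam, is_comma f g P p q lam).

Definition PointwiseLeftExt (f g h : Mor K) (phi : Cell K) : Prop :=
  forall (X : Ob K) (c : Mor K), is1cell c X (cod g) ->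
  forall (P : Ob K) (p q : Mor K) (lam : Cell K), is_comma g c P p q lam ->
  LeftExt (comp f p) q (comp h c) (vcomp (whiskerL h lam) (whiskerR phi p)).

End TwoCatDefs.

Arguments is1cell {K} f A B.
Arguments is2cell {K} a f g.
Arguments whiskerL {K} g a.
Arguments whiskerR {K} a f.
Arguments LeftExt {K} f g h phi.
Arguments LeftLift {K} f g h phi.
Arguments AbsLeftLift {K} f g h phi.
Arguments is_comma {K} f g P p q lam.
Arguments is_pullback {K} f g P p q.
Arguments is_terminal {K} T.
Arguments PointwiseLeftExt {K} f g h phi.

Record GoodYoneda (K : TwoCat) := {
  adm : Mor K -> Prop;
  adm_comp : forall f g : Mor K, cod g = dom f -> adm f -> adm (comp f g);
  PP : Ob K -> Ob K;
  yon : Ob K -> Mor K;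
  yon_typ : forall A, adm (idm A) -> is1cell (yon A) A (PP A);
  yon_adm : forall A, adm (idm A) -> adm (yon A);
  res : Mor K -> Mor K;
  chi : Mor K -> Cell K;
  res_typ : forall f, adm (idm (dom f)) -> adm f ->
      is1cell (res f) (cod f) (PP (dom f));
  chi_typ : forall f, adm (idm (dom f)) -> adm f ->
      is2cell (chi f) (yon (dom f)) (comp (res f) f);
  yoneda_i : forall f, adm (idm (dom f)) -> adm f ->
      AbsLeftLift (yon (dom f)) f (res f) (chi f);
  yoneda_ii : forall (f g : Mor K) (psi : Cell K),
      adm (idm (dom f)) -> adm f ->
      is1cell g (cod f) (PP (dom f)) ->
      is2cell psi (yon (dom f)) (comp g f) ->
      AbsLeftLift (yon (dom f)) f g psi ->
      PointwiseLeftExt (yon (dom f)) f g psi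
}.

Arguments adm {K} _ _.
Arguments PP {K} _ _.
Arguments yon {K} _ _.
Arguments res {K} _ _.
Arguments chi {K} _ _.

Definition adm_ob {K : TwoCat} (Y : GoodYoneda K) (A : Ob K) : Prop := adm Y (idm A).

Definition small {K : TwoCat} (Y : GoodYoneda K) (C : Ob K) : Prop :=
  adm_ob Y C /\ adm_ob Y (PP Y C).

From Stdlib Require Import Setoid.

(* The equation [(A(f,1) eta')·(chi^f p) = (eta q)·lam] is a bijection between 2-cells
   [i => A(f,1) k'] and 2-cells [f p => k' q], natural in [k']: [chi^f p] is a left lifting
   by axiom (i), and [lam] exhibits [i] as a left extension of [y_C p] along [q] because, by
   axiom (ii) applied to the identity of [P C], every comma square over [y_C] is a left
   extension. Unique factorisation of 2-cells through [eta] is therefore equivalent to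
   unique factorisation through [eta'], which is (1).
   For (2), whisker by [c : X -> M] and paste with a comma square [(p', q', lam')] of [q]
   and [c]: the pair [(eta c, (k lam')·(eta' p'))] satisfies the same equation for [i c]
   and [k c], so the argument for (1) applies once the pasted square is known to be a left
   extension. It is: the comma square of [y_C] and [i c] maps into it by some [v] and back
   by some [u], with a 2-cell [1 => v u] that is the identity on both legs, so the pasted
   square is a retract of a left extension. *)

Section TwoCategoryCalculus.
Context {K : TwoCat}.
Implicit Types (A B C D : Ob K) (f g h : Mor K) (a b : Cell K).

Lemma is1cell_idm A : is1cell (idm A) A A.
Proof. split; [apply dom_idm | apply cod_idm]. Qed.

Lemma is1cell_comp {A B C f g} : is1cell f A B -> is1cell g B C -> is1cell (comp g f) A C.
Proof. intros [] []; split; [rewrite dom_comp | rewrite cod_comp]; congruence. Qed.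

Lemma is2cell_idc f : is2cell (idc f) f f.
Proof. split; [apply src_idc | apply tgt_idc]. Qed.

Lemma is2cell_vcomp {a b f g h} : is2cell a f g -> is2cell b g h -> is2cell (vcomp b a) f h.
Proof. intros [] []; split; [rewrite src_vcomp | rewrite tgt_vcomp]; congruence. Qed.

Lemma is2cell_whiskerL {A B C a f g h} :
  is2cell a f g -> is1cell f A B -> is1cell h B C ->
  is2cell (whiskerL h a) (comp h f) (comp h g).
Proof.
  intros [Ha Ha'] [] []; unfold whiskerL; split;
  [rewrite src_hcomp | rewrite tgt_hcomp]; rewrite ?src_idc, ?tgt_idc, <- ?Ha';
  try rewrite <- cod_par; congruence.
Qed.

Lemma is2cell_whiskerR {A B C a f g h} :
  is2cell a f g -> is1cell f B C -> is1cell h A B ->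
  is2cell (whiskerR a h) (comp f h) (comp g h).
Proof.
  intros [Ha Ha'] [] []; unfold whiskerR; split;
  [rewrite src_hcomp | rewrite tgt_hcomp]; rewrite ?src_idc, ?tgt_idc; congruence.
Qed.

Lemma is1cell_tgt {A B a f g} : is2cell a f g -> is1cell f A B -> is1cell g A B.
Proof.
  intros [<- <-] []; split; [rewrite <- dom_par | rewrite <- cod_par]; assumption.
Qed.

Lemma is2cell_congr {a f g f' g'} : is2cell a f g -> f = f' -> g = g' -> is2cell a f' g'.
Proof. intros H -> ->; exact H. Qed.

(* Typing premises of rewrite lemmas are bundled into one conjunction, so that
   [erewrite ... by typecheck] solves them in a single backtracking search. *)
Lemma comp_assoc_typed {A B C D f g h} :
  is1cell f A B /\ is1cell g B C /\ is1cell h C D ->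
  comp (comp h g) f = comp h (comp g f).
Proof. intros [[] [[] []]]; symmetry; apply comp_assoc; congruence. Qed.

Lemma comp_idl_typed {A B f} : is1cell f A B -> comp (idm B) f = f.
Proof. intros [_ <-]; apply comp_idl. Qed.

Lemma comp_idr_typed {A B f} : is1cell f A B -> comp f (idm A) = f.
Proof. intros [<- _]; apply comp_idr. Qed.

Lemma vcomp_idl_typed {a f g} : is2cell a f g -> vcomp (idc g) a = a.
Proof. intros [_ <-]; apply vcomp_idl. Qed.

Lemma vcomp_idr_typed {a f g} : is2cell a f g -> vcomp a (idc f) = a.
Proof. intros [<- _]; apply vcomp_idr. Qed.

Lemma vcomp_assoc_typed {a b c f g h l} :
  is2cell a f g /\ is2cell b g h /\ is2cell c h l ->
  vcomp c (vcomp b a) = vcomp (vcomp c b) a.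
Proof. intros [[] [[] []]]; apply vcomp_assoc; congruence. Qed.

Lemma whiskerL_vcomp {A B C a b f g g' h} :
  is2cell a f g /\ is2cell b g g' /\ is1cell f A B /\ is1cell h B C ->
  whiskerL h (vcomp b a) = vcomp (whiskerL h b) (whiskerL h a).
Proof.
  intros [[Ha Ha'] [[Hb Hb'] [[Hf Hf'] [Hh Hh']]]]; unfold whiskerL.
  rewrite <- (vcomp_idl _ (idc h)) at 1; rewrite tgt_idc.
  apply interchange; rewrite ?src_idc, ?tgt_idc; congruence.
Qed.

Lemma whiskerR_vcomp {A B C a b f g g' h} :
  is2cell a f g /\ is2cell b g g' /\ is1cell f B C /\ is1cell h A B ->
  whiskerR (vcomp b a) h = vcomp (whiskerR b h) (whiskerR a h).
Proof.
  intros [[Ha Ha'] [[Hb Hb'] [[Hf Hf'] [Hh Hh']]]]; unfold whiskerR.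
  rewrite <- (vcomp_idl _ (idc h)) at 1; rewrite tgt_idc.
  apply interchange; rewrite ?src_idc, ?tgt_idc; congruence.
Qed.

Lemma whiskerL_whiskerL {A B C D a f f' g h} :
  is2cell a f f' /\ is1cell f A B /\ is1cell h B C /\ is1cell g C D ->
  whiskerL g (whiskerL h a) = whiskerL (comp g h) a.
Proof.
  intros [[Ha _] [[] [[] []]]]; unfold whiskerL.
  rewrite hcomp_assoc, hcomp_idc; rewrite ?src_idc; congruence.
Qed.

Lemma whiskerR_whiskerR {A B C D a f g h h'} :
  is2cell a h h' /\ is1cell h C D /\ is1cell f B C /\ is1cell g A B ->
  whiskerR (whiskerR a f) g = whiskerR a (comp f g).
Proof.
  intros [[Ha _] [[] [[] []]]]; unfold whiskerR.
  rewrite <- hcomp_assoc, hcomp_idc; rewrite ?src_idc; congruence.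
Qed.

Lemma whiskerR_whiskerL {A B C D a f f' g h} :
  is2cell a f f' /\ is1cell f B C /\ is1cell h C D /\ is1cell g A B ->
  whiskerR (whiskerL h a) g = whiskerL h (whiskerR a g).
Proof.
  intros [[Ha _] [[] [[] []]]]; unfold whiskerR, whiskerL.
  rewrite hcomp_assoc; rewrite ?src_idc; congruence.
Qed.

Lemma whiskerL_idc {A B C f h} :
  is1cell f A B /\ is1cell h B C -> whiskerL h (idc f) = idc (comp h f).
Proof. intros [[] []]; apply hcomp_idc; congruence. Qed.

Lemma whiskerR_idc {A B C f h} :
  is1cell f B C /\ is1cell h A B -> whiskerR (idc f) h = idc (comp f h).
Proof. intros [[] []]; apply hcomp_idc; congruence. Qed.

Lemma whiskerL_idm {A B a f g} : is2cell a f g /\ is1cell f A B -> whiskerL (idm B) a = a.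
Proof. intros [[<- _] [_ <-]]; apply hcomp_idl. Qed.

Lemma whiskerR_idm {A B a f g} : is2cell a f g /\ is1cell f A B -> whiskerR a (idm A) = a.
Proof. intros [[<- _] [<- _]]; apply hcomp_idr. Qed.

Lemma whisker_exchange {A B C a b f f' g g'} :
  is2cell a f f' /\ is1cell f A B /\ is2cell b g g' /\ is1cell g B C ->
  vcomp (whiskerL g' a) (whiskerR b f) = vcomp (whiskerR b f') (whiskerL g a).
Proof.
  intros [[Ha Ha'] [[Hf Hf'] [[Hb Hb'] [Hg Hg']]]]; unfold whiskerL, whiskerR.
  rewrite <- !interchange; rewrite ?src_idc, ?tgt_idc; try congruence.
  rewrite <- Hb', <- Ha, vcomp_idl, vcomp_idr, <- Hb, <- Ha', vcomp_idr, vcomp_idl.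
  reflexivity.
Qed.

End TwoCategoryCalculus.

Create HintDb twocell discriminated.
Global Hint Opaque is1cell is2cell whiskerL whiskerR : twocell.
Global Hint Resolve conj is1cell_idm is1cell_comp is2cell_idc is2cell_vcomp
  is2cell_whiskerL is2cell_whiskerR : twocell.

Ltac typecheck_strict := solve [eauto 12 with nocore twocell].

Ltac comp_assoc_norm := repeat (erewrite comp_assoc_typed by typecheck_strict).

(* Retypes a 2-cell whose boundary 1-cells agree with the expected ones only up to
   associativity of [comp]. *)
Create HintDb twocell_conv discriminated.
Global Hint Extern 20 (is2cell _ _ _) =>
  eapply is2cell_congr;
  [typecheck_strict | comp_assoc_norm; reflexivity | comp_assoc_norm; reflexivity]
  : twocell_conv.

Ltac typecheck := solve [eauto 12 with nocore twocell twocell_conv].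

Section LeftExtRestriction.
Context {K : TwoCat}.

Lemma whiskerR_fixed {P Z : Ob K} {b : Cell K} {F G s : Mor K} (sg : Cell K) :
  is2cell b F G -> is1cell F P Z -> is2cell sg (idm P) s -> is1cell s P P ->
  whiskerL F sg = idc F -> whiskerL G sg = idc G -> whiskerR b s = b.
Proof.
  intros Hb HF Hsg Hs HFsg HGsg.
  assert (HG : is1cell G P Z) by exact (is1cell_tgt Hb HF).
  assert (HFs : comp F s = F).
  { destruct (is2cell_whiskerL Hsg (is1cell_idm P) HF) as [_ E].
    rewrite HFsg, tgt_idc in E; symmetry; exact E. }
  (* interchange: [(G sg)·(b 1) = (b s)·(F sg)], and both whiskerings of [sg] are identities *)
  pose proof (whisker_exchange (conj Hsg (conj (is1cell_idm P) (conj Hb HF)))) as E.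
  rewrite HFsg, HGsg, (whiskerR_idm (conj Hb HF)), (vcomp_idl_typed Hb) in E.
  assert (Hbs : is2cell (whiskerR b s) F (comp G s)) by (rewrite <- HFs at 1; typecheck).
  rewrite (vcomp_idr_typed Hbs) in E; symmetry; exact E.
Qed.

Section Retract.
Context {P0 P X Z : Ob K} {F g h : Mor K} (v u : Mor K) {phi : Cell K} (sg : Cell K).
Hypotheses (HF : is1cell F P Z) (Hg : is1cell g P X) (Hh : is1cell h X Z)
  (Hphi : is2cell phi F (comp h g)) (Hv : is1cell v P0 P) (Hu : is1cell u P P0)
  (Hsg : is2cell sg (idm P) (comp v u))
  (HFsg : whiskerL F sg = idc F) (Hgsg : whiskerL g sg = idc g).

Lemma whiskerR_retract_inj (k : Mor K) (a b : Cell K) :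
  is1cell k X Z -> is2cell a F (comp k g) -> is2cell b F (comp k g) ->
  whiskerR a v = whiskerR b v -> a = b.
Proof.
  intros Hk Ha Hb E.
  assert (Hkg : whiskerL (comp k g) sg = idc (comp k g)).
  { erewrite <- whiskerL_whiskerL, Hgsg, whiskerL_idc by typecheck; reflexivity. }
  rewrite <- (whiskerR_fixed sg Ha HF Hsg ltac:(typecheck) HFsg Hkg),
          <- (whiskerR_fixed sg Hb HF Hsg ltac:(typecheck) HFsg Hkg).
  erewrite <- !whiskerR_whiskerR by typecheck.
  rewrite E; reflexivity.
Qed.

Lemma LeftExt_of_restriction :
  LeftExt (comp F v) (comp g v) h (whiskerR phi v) -> LeftExt F g h phi.
Proof.
  intros LE k Hk b Hb.
  rewrite (proj2 Hg), (proj2 Hh) in Hk.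
  assert (Hk' : is1cell k (cod (comp g v)) (cod h)).
  { rewrite (proj2 (is1cell_comp Hv Hg)), (proj2 Hh); exact Hk. }
  destruct (LE k Hk' (whiskerR b v)) as (kap & [Hkap Ekap] & Ukap); [typecheck |].
  exists kap; split.
  - split; [exact Hkap|].
    apply (whiskerR_retract_inj k); [exact Hk | typecheck | exact Hb |].
    erewrite whiskerR_vcomp, whiskerR_whiskerR by typecheck; exact Ekap.
  - intros kap1 [Hkap1 Ekap1]; apply Ukap; split; [exact Hkap1|].
    rewrite <- Ekap1; erewrite whiskerR_vcomp, whiskerR_whiskerR by typecheck; reflexivity.
Qed.

End Retract.
End LeftExtRestriction.

Section Paste.
Context {K : TwoCat}.

Definition paste (h : Mor K) (b a : Cell K) (p : Mor K) : Cell K :=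
  vcomp (whiskerL h b) (whiskerR a p).

Lemma is2cell_paste {P P0 X Z : Ob K} {F G q0 p H : Mor K} {a b : Cell K} :
  is2cell a F (comp G q0) -> is1cell F P0 Z -> is1cell q0 P0 X -> is1cell G X Z ->
  is1cell p P P0 -> is2cell b (comp q0 p) H ->
  is2cell (paste G b a p) (comp F p) (comp G H).
Proof.
  intros Ha HF Hq0 HG Hp Hb; unfold paste.
  apply (is2cell_vcomp (g := comp G (comp q0 p))); typecheck.
Qed.

End Paste.

Global Hint Opaque paste : twocell.
Global Hint Resolve is2cell_paste : twocell.

Section Comma.
Context {K : TwoCat}.

Lemma comma_typing {A B D P : Ob K} {f g p q : Mor K} {lam : Cell K} :
  is_comma f g P p q lam -> is1cell f A B -> is1cell g D B ->
  is1cell p P A /\ is1cell q P D /\ is2cell lam (comp f p) (comp g q).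
Proof. intros (_ & Hp & Hq & Hlam & _) [<- _] [<- _]; auto. Qed.

Lemma comma_factor {A B D P X : Ob K} {f g p q a c : Mor K} {lam th : Cell K} :
  is_comma f g P p q lam -> is1cell f A B -> is1cell g D B ->
  is1cell a X A -> is1cell c X D -> is2cell th (comp f a) (comp g c) ->
  exists u, is1cell u X P /\ comp p u = a /\ comp q u = c /\ whiskerR lam u = th.
Proof.
  intros (_ & _ & _ & _ & U & _) [<- _] [<- _] Ha Hc Hth.
  destruct (U X a c th Ha Hc Hth) as [u [Hu _]]; exists u; exact Hu.
Qed.

Lemma comma_factor2 {P X : Ob K} {f g p q u v : Mor K} {lam al be : Cell K} :
  is_comma f g P p q lam -> is1cell u X P -> is1cell v X P ->
  is2cell al (comp p u) (comp p v) -> is2cell be (comp q u) (comp q v) ->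
  vcomp (whiskerL g be) (whiskerR lam u) = vcomp (whiskerR lam v) (whiskerL f al) ->
  exists ga, is2cell ga u v /\ whiskerL p ga = al /\ whiskerL q ga = be.
Proof.
  intros (_ & _ & _ & _ & _ & U) Hu Hv Hal Hbe E.
  destruct (U X u v al be Hu Hv Hal Hbe E) as [ga [Hga _]]; exists ga; exact Hga.
Qed.

Section CommaPaste.
Context {C Z M X P P' P'' : Ob K} {y i c p q p' q' p'' q'' : Mor K}
  {lam lam' lam'' : Cell K}.
Hypotheses (Hy : is1cell y C Z) (Hi : is1cell i M Z) (Hc : is1cell c X M)
  (Hcomma : is_comma y i P p q lam) (Hcomma' : is_comma q c P' p' q' lam')
  (Hcomma'' : is_comma y (comp i c) P'' p'' q'' lam'').

Let Hp : is1cell p P C := proj1 (comma_typing Hcomma Hy Hi).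
Let Hq : is1cell q P M := proj1 (proj2 (comma_typing Hcomma Hy Hi)).
Let Hlam : is2cell lam (comp y p) (comp i q) := proj2 (proj2 (comma_typing Hcomma Hy Hi)).
Let Hp' : is1cell p' P' P := proj1 (comma_typing Hcomma' Hq Hc).
Let Hq' : is1cell q' P' X := proj1 (proj2 (comma_typing Hcomma' Hq Hc)).
Let Hlam' : is2cell lam' (comp q p') (comp c q') :=
  proj2 (proj2 (comma_typing Hcomma' Hq Hc)).
Let Hic : is1cell (comp i c) X Z := is1cell_comp Hc Hi.
Let Hp'' : is1cell p'' P'' C := proj1 (comma_typing Hcomma'' Hy Hic).
Let Hq'' : is1cell q'' P'' X := proj1 (proj2 (comma_typing Hcomma'' Hy Hic)).
Let Hlam'' : is2cell lam'' (comp y p'') (comp (comp i c) q'') :=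
  proj2 (proj2 (comma_typing Hcomma'' Hy Hic)).

Lemma comma_to_paste : exists v, is1cell v P'' P' /\
  comp p (comp p' v) = p'' /\ comp q (comp p' v) = comp c q'' /\ comp q' v = q'' /\
  whiskerR lam (comp p' v) = lam'' /\ whiskerR lam' v = idc (comp c q'').
Proof.
  destruct (comma_factor (X := P'') (a := p'') (c := comp c q'') (th := lam'') Hcomma Hy Hi)
    as (w & Hw & Hpw & Hqw & Hlamw); [typecheck | typecheck | typecheck |].
  destruct (comma_factor (X := P'') (a := w) (c := q'') (th := idc (comp c q'')) Hcomma' Hq Hc)
    as (v & Hv & Hp'v & Hq'v & Hlam'v); [typecheck | typecheck | rewrite Hqw; typecheck |].
  exists v; rewrite Hp'v; auto 7.
Qed.

Section Retraction.
Variable v : Mor K.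
Hypotheses (Hv : is1cell v P'' P') (Hpv : comp p (comp p' v) = p'')
  (Hqv : comp q (comp p' v) = comp c q'') (Hq'v : comp q' v = q'')
  (Hlamv : whiskerR lam (comp p' v) = lam'') (Hlam'v : whiskerR lam' v = idc (comp c q'')).

Lemma paste_to_comma : exists u sg, is1cell u P' P'' /\ is2cell sg (idm P') (comp v u) /\
  whiskerL (comp p p') sg = idc (comp p p') /\ whiskerL q' sg = idc q'.
Proof.
  destruct (comma_factor (X := P') (a := comp p p') (c := q') (th := paste i lam' lam p')
              Hcomma'' Hy Hic) as (u & Hu & Hp''u & Hq''u & Hlam''u); [typecheck.. |].
  assert (Hpvu : comp p (comp (comp p' v) u) = comp p p').
  { erewrite <- comp_assoc_typed, Hpv by typecheck; exact Hp''u. }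
  assert (Hqvu : comp q (comp (comp p' v) u) = comp c q').
  { erewrite <- comp_assoc_typed, Hqv, comp_assoc_typed, Hq''u by typecheck; reflexivity. }
  destruct (comma_factor2 (X := P') (u := p') (v := comp (comp p' v) u)
              (al := idc (comp p p')) (be := lam') Hcomma)
    as (al & Hal & Hpal & Hqal);
    [typecheck | typecheck | rewrite Hpvu; typecheck | rewrite Hqvu; typecheck | |].
  { erewrite <- whiskerR_whiskerR, Hlamv, Hlam''u, whiskerL_idc by typecheck.
    symmetry; apply (vcomp_idr_typed (g := comp i (comp c q'))); typecheck. }
  assert (Hvu : comp q' (comp v u) = q').
  { erewrite <- comp_assoc_typed, Hq'v by typecheck; exact Hq''u. }
  destruct (comma_factor2 (X := P') (u := idm P') (v := comp v u) (al := al) (be := idc q') Hcomma')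
    as (sg & Hsg & Hp'sg & Hq'sg); [typecheck | typecheck | | | |].
  - erewrite comp_idr_typed, <- comp_assoc_typed by typecheck; exact Hal.
  - erewrite comp_idr_typed, Hvu by typecheck; typecheck.
  - erewrite whiskerL_idc, whiskerR_idm, vcomp_idl_typed, Hqal, <- whiskerR_whiskerR, Hlam'v,
      whiskerR_idc, comp_assoc_typed, Hq''u, vcomp_idl_typed by typecheck; reflexivity.
  - exists u, sg; refine (conj Hu (conj Hsg (conj _ Hq'sg))).
    erewrite <- whiskerL_whiskerL, Hp'sg by typecheck; exact Hpal.
Qed.

End Retraction.

Lemma paste_LeftExt :
  LeftExt (comp y p'') q'' (comp i c) lam'' ->
  LeftExt (comp y (comp p p')) q' (comp i c) (paste i lam' lam p').
Proof.
  intros LE.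
  destruct comma_to_paste as (v & Hv & Hpv & Hqv & Hq'v & Hlamv & Hlam'v).
  destruct (paste_to_comma v Hv Hpv Hqv Hq'v Hlamv Hlam'v)
    as (u & sg & Hu & Hsg & Hppsg & Hq'sg).
  eapply (LeftExt_of_restriction v u sg); [typecheck.. | | exact Hq'sg |].
  - erewrite <- whiskerL_whiskerL, Hppsg, whiskerL_idc by typecheck; reflexivity.
  - erewrite !comp_assoc_typed, Hpv, Hq'v by typecheck.
    unfold paste; erewrite whiskerR_vcomp, whiskerR_whiskerR, Hlamv, whiskerR_whiskerL,
      Hlam'v, whiskerL_idc by typecheck.
    rewrite (vcomp_idl_typed (f := comp y p'')); [exact LE | typecheck].
Qed.

End CommaPaste.

End Comma.

Section ExistsUniqueTransfer.
Context {I S T : Type} (inI : I -> Prop) (inS : S -> Prop) (inT : T -> Prop)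
  (R : S -> T -> Prop) (alpha : I -> S) (beta : I -> T).
Hypotheses (R_functional : forall s t t', R s t -> R s t' -> t = t')
  (R_injective : forall s s' t, R s t -> R s' t -> s = s')
  (R_compat : forall x, inI x -> R (alpha x) (beta x)).

Lemma exists_unique_transfer :
  (forall t, inT t -> exists s, inS s /\ R s t) ->
  (forall s, inS s -> exists! x, inI x /\ alpha x = s) ->
  (forall t, inT t -> exists! x, inI x /\ beta x = t).
Proof.
  intros R_surj Halpha t Ht.
  destruct (R_surj t Ht) as (s & Hs & Rst).
  destruct (Halpha s Hs) as (x & [Hx <-] & Ux).
  exists x; split.
  - split; [exact Hx | exact (R_functional _ _ _ (R_compat x Hx) Rst)].
  - intros x' [Hx' <-]; apply Ux; split; [exact Hx'|].
    exact (R_injective _ _ _ (R_compat x' Hx') Rst).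
Qed.

End ExistsUniqueTransfer.

Lemma exists_unique_transfer_iff {I S T : Type} (inI : I -> Prop) (inS : S -> Prop)
  (inT : T -> Prop) (R : S -> T -> Prop) (alpha : I -> S) (beta : I -> T) :
  (forall s t t', R s t -> R s t' -> t = t') ->
  (forall s s' t, R s t -> R s' t -> s = s') ->
  (forall x, inI x -> R (alpha x) (beta x)) ->
  (forall s, inS s -> exists t, inT t /\ R s t) ->
  (forall t, inT t -> exists s, inS s /\ R s t) ->
  (forall s, inS s -> exists! x, inI x /\ alpha x = s) <->
  (forall t, inT t -> exists! x, inI x /\ beta x = t).
Proof.
  intros Rfun Rinj Rcompat Rtot Rsurj; split.
  - exact (exists_unique_transfer inI inS inT R alpha beta Rfun Rinj Rcompat Rsurj).
  - apply (exists_unique_transfer inI inT inS (fun t s => R s t) beta alpha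
             (fun t s s' => Rinj s s' t) (fun t t' s => Rfun s t t') Rcompat).
    exact Rtot.
Qed.

Definition transposes {K : TwoCat} (r f i p q : Mor K) (chi lam : Cell K)
  (k : Mor K) (th ze : Cell K) : Prop :=
  is2cell th i (comp r k) /\ is2cell ze (comp f p) (comp k q) /\
  vcomp (whiskerL r ze) (whiskerR chi p) = vcomp (whiskerR th q) lam.

Section Transpose.
Context {K : TwoCat} {C Z A X Q : Ob K} {y r f i p q : Mor K} {chi lam : Cell K}.
Hypotheses (Hy : is1cell y C Z) (Hr : is1cell r A Z) (Hf : is1cell f C A)
  (Hchi : is2cell chi y (comp r f)) (Hi : is1cell i X Z) (Hp : is1cell p Q C)
  (Hq : is1cell q Q X) (Hlam : is2cell lam (comp y p) (comp i q))
  (Hlift : LeftLift (comp y p) (comp f p) r (whiskerR chi p))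
  (Hext : LeftExt (comp y p) q i lam).

Local Notation transposes := (transposes r f i p q chi lam).

Lemma transpose_of_lifting (k : Mor K) (th : Cell K) :
  is1cell k X A -> is2cell th i (comp r k) -> exists! ze, transposes k th ze.
Proof.
  intros Hk Hth.
  assert (Hkq : is1cell (comp k q) (dom (comp f p)) (cod (comp f p))).
  { destruct (is1cell_comp Hp Hf) as [-> ->]; typecheck. }
  destruct (Hlift _ Hkq (vcomp (whiskerR th q) lam)) as (ze & [Hze E] & U); [typecheck |].
  exists ze; split; [split; [exact Hth | split; [exact Hze | exact E]] |].
  intros ze' (_ & Hze' & E'); apply U; split; [exact Hze' | exact E'].
Qed.

Lemma transpose_of_extension (k : Mor K) (ze : Cell K) :
  is1cell k X A -> is2cell ze (comp f p) (comp k q) -> exists! th, transposes k th ze.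
Proof.
  intros Hk Hze.
  assert (Hrk : is1cell (comp r k) (cod q) (cod i)).
  { destruct Hq as [_ ->]; destruct Hi as [_ ->]; typecheck. }
  destruct (Hext _ Hrk (vcomp (whiskerL r ze) (whiskerR chi p))) as (th & [Hth E] & U);
    [typecheck |].
  exists th; split; [split; [exact Hth | split; [exact Hze | symmetry; exact E]] |].
  intros th' (Hth' & _ & E'); apply U; split; [exact Hth' | symmetry; exact E'].
Qed.

Lemma transposes_whisker (k0 k : Mor K) (eta eta' ka : Cell K) :
  is1cell k0 X A -> is1cell k X A -> is2cell ka k0 k -> transposes k0 eta eta' ->
  transposes k (vcomp (whiskerL r ka) eta) (vcomp (whiskerR ka q) eta').
Proof.
  intros Hk0 Hk Hka (Heta & Heta' & E).
  split; [typecheck | split; [typecheck |]].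
  erewrite whiskerL_vcomp, <- vcomp_assoc_typed, E, whiskerR_vcomp by typecheck.
  erewrite vcomp_assoc_typed, whiskerR_whiskerL by typecheck; reflexivity.
Qed.

Lemma LeftLift_iff_LeftExt (k0 : Mor K) (eta eta' : Cell K) :
  is1cell k0 X A -> transposes k0 eta eta' ->
  LeftLift i k0 r eta <-> LeftExt (comp f p) q k0 eta'.
Proof.
  intros Hk0 Ht0.
  assert (Hequiv : forall k, is1cell k X A ->
    (forall th, is2cell th i (comp r k) ->
       exists! ka, is2cell ka k0 k /\ vcomp (whiskerL r ka) eta = th) <->
    (forall ze, is2cell ze (comp f p) (comp k q) ->
       exists! ka, is2cell ka k0 k /\ vcomp (whiskerR ka q) eta' = ze)).
  { intros k Hk.
    apply (exists_unique_transfer_iff _ _ _ (transposes k)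
             (fun ka => vcomp (whiskerL r ka) eta) (fun ka => vcomp (whiskerR ka q) eta')).
    - intros th ze ze' Ht Ht'.
      destruct (transpose_of_lifting k th Hk (proj1 Ht)) as (ze0 & _ & U).
      rewrite <- (U ze Ht); exact (U ze' Ht').
    - intros th th' ze Ht Ht'.
      destruct (transpose_of_extension k ze Hk (proj1 (proj2 Ht))) as (th0 & _ & U).
      rewrite <- (U th Ht); exact (U th' Ht').
    - intros ka Hka; exact (transposes_whisker k0 k eta eta' ka Hk0 Hk Hka Ht0).
    - intros th Hth; destruct (transpose_of_lifting k th Hk Hth) as (ze & Ht & _).
      exists ze; split; [exact (proj1 (proj2 Ht)) | exact Ht].
    - intros ze Hze; destruct (transpose_of_extension k ze Hk Hze) as (th & Ht & _).
      exists th; split; [exact (proj1 Ht) | exact Ht]. }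
  destruct Hk0 as [Hdk0 Hck0]; pose proof (proj2 Hq) as Hcq.
  unfold LeftLift, LeftExt; rewrite Hdk0, Hck0, Hcq.
  split; intros H k Hk; apply (Hequiv k Hk), H, Hk.
Qed.

End Transpose.

Lemma transposes_paste {K : TwoCat} {C Z A M X Q P' : Ob K} {y r f i c p q p' q' k : Mor K}
  {chi lam lam' eta eta' : Cell K} :
  is1cell y C Z -> is1cell r A Z -> is1cell f C A -> is2cell chi y (comp r f) ->
  is1cell i M Z -> is1cell c X M -> is1cell p Q C -> is1cell q Q M -> is1cell p' P' Q ->
  is1cell q' P' X -> is1cell k M A -> is2cell lam (comp y p) (comp i q) ->
  is2cell lam' (comp q p') (comp c q') ->
  transposes r f i p q chi lam k eta eta' ->
  transposes r f (comp i c) (comp p p') q' chi (paste i lam' lam p')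
    (comp k c) (whiskerR eta c) (paste k lam' eta' p').
Proof.
  intros Hy Hr Hf Hchi Hi Hc Hp Hq Hp' Hq' Hk Hlam Hlam' (Heta & Heta' & E).
  split; [typecheck | split; [typecheck |]].
  unfold paste.
  erewrite whiskerL_vcomp, <- vcomp_assoc_typed, <- whiskerR_whiskerL, <- whiskerR_whiskerR,
    <- whiskerR_vcomp, E by typecheck.
  erewrite whiskerR_vcomp, !whiskerR_whiskerR, vcomp_assoc_typed, whiskerL_whiskerL,
    whisker_exchange, <- vcomp_assoc_typed by typecheck.
  reflexivity.
Qed.

Lemma idc_AbsLeftLift {K : TwoCat} {C Z : Ob K} {y : Mor K} :
  is1cell y C Z -> AbsLeftLift y y (idm Z) (idc y).
Proof.
  intros Hy j Hj k Hk b Hb.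
  assert (Hj' : is1cell j (dom j) C) by (split; [reflexivity | rewrite Hj; apply Hy]).
  assert (Hk' : is1cell k (dom j) Z).
  { destruct (is1cell_comp Hj' Hy) as [E E']; rewrite E, E' in Hk; exact Hk. }
  erewrite comp_idl_typed in Hb by typecheck.
  erewrite whiskerR_idc by typecheck.
  exists b; split.
  - split; [exact Hb |]; erewrite whiskerL_idm, vcomp_idr_typed by typecheck; reflexivity.
  - intros kap [Hkap E].
    erewrite whiskerL_idm, vcomp_idr_typed in E by typecheck; symmetry; exact E.
Qed.

Section Yoneda.
Context {K : TwoCat} (Y : GoodYoneda K) {C : Ob K}.
Hypothesis HC : adm_ob Y C.

Lemma is1cell_yon : is1cell (yon Y C) C (PP Y C).
Proof. exact (yon_typ Y C HC). Qed.

Lemma yon_comma_LeftExt {X P : Ob K} {c p q : Mor K} {lam : Cell K} :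
  is1cell c X (PP Y C) -> is_comma (yon Y C) c P p q lam ->
  LeftExt (comp (yon Y C) p) q c lam.
Proof.
  intros Hc Hcomma.
  pose proof is1cell_yon as Hy.
  destruct (comma_typing Hcomma Hy Hc) as (Hp & Hq & Hlam).
  assert (Hpw : PointwiseLeftExt (yon Y C) (yon Y C) (idm (PP Y C)) (idc (yon Y C))).
  { pose proof (@yoneda_ii K Y (yon Y C) (idm (PP Y C)) (idc (yon Y C))) as H.
    rewrite (proj1 Hy), (proj2 Hy) in H.
    apply H; [exact HC | exact (yon_adm Y C HC) | typecheck | |].
    - erewrite comp_idl_typed by typecheck; typecheck.
    - exact (idc_AbsLeftLift Hy). }
  assert (Hc' : is1cell c X (cod (yon Y C))) by (rewrite (proj2 Hy); exact Hc).
  pose proof (Hpw X c Hc' P p q lam Hcomma) as H.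
  erewrite comp_idl_typed, whiskerR_idc, whiskerL_idm, vcomp_idr_typed in H by typecheck; exact H.
Qed.

Section Res.
Context {A : Ob K} {f : Mor K}.
Hypotheses (Hf : is1cell f C A) (Hfa : adm Y f).

Lemma is1cell_res : is1cell (res Y f) A (PP Y C).
Proof.
  destruct Hf as [<- <-]; exact (res_typ Y f HC Hfa).
Qed.

Lemma is2cell_chi : is2cell (chi Y f) (yon Y C) (comp (res Y f) f).
Proof.
  destruct Hf as [<- _]; exact (chi_typ Y f HC Hfa).
Qed.

Lemma chi_LeftLift {D : Ob K} {j : Mor K} :
  is1cell j D C -> LeftLift (comp (yon Y C) j) (comp f j) (res Y f) (whiskerR (chi Y f) j).
Proof.
  intros [_ Hj]; destruct Hf as [HfC _].
  pose proof (yoneda_i Y f) as H; rewrite HfC in H.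
  apply H; [exact HC | exact Hfa | rewrite Hj, HfC; reflexivity].
Qed.

End Res.

End Yoneda.

Section LiftingVersusExtension.
Context {K : TwoCat} (Y : GoodYoneda K) {C M A P : Ob K} {i f k p q : Mor K}
  {lam eta eta' : Cell K}.
Hypotheses (HC : adm_ob Y C) (Hi : is1cell i M (PP Y C)) (Hf : is1cell f C A)
  (Hfa : adm Y f) (Hk : is1cell k M A) (Hcomma : is_comma (yon Y C) i P p q lam)
  (Ht : transposes (res Y f) f i p q (chi Y f) lam k eta eta').

Let Hy : is1cell (yon Y C) C (PP Y C) := is1cell_yon Y HC.
Let Hr : is1cell (res Y f) A (PP Y C) := is1cell_res Y HC Hf Hfa.
Let Hchi : is2cell (chi Y f) (yon Y C) (comp (res Y f) f) := is2cell_chi Y HC Hf Hfa.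
Let Hp : is1cell p P C := proj1 (comma_typing Hcomma Hy Hi).
Let Hq : is1cell q P M := proj1 (proj2 (comma_typing Hcomma Hy Hi)).
Let Hlam : is2cell lam (comp (yon Y C) p) (comp i q) :=
  proj2 (proj2 (comma_typing Hcomma Hy Hi)).

Lemma LeftLift_iff_LeftExt_yon : LeftLift i k (res Y f) eta <-> LeftExt (comp f p) q k eta'.
Proof.
  exact (LeftLift_iff_LeftExt Hy Hr Hf Hchi Hi Hp Hq Hlam (chi_LeftLift Y HC Hf Hfa Hp)
           (yon_comma_LeftExt Y HC Hi Hcomma) k eta eta' Hk Ht).
Qed.

Lemma LeftLift_whisker_iff_LeftExt_paste (Hfc : finitely_complete K) {X P' : Ob K}
  {c p' q' : Mor K} {lam' : Cell K} :
  is1cell c X M -> is_comma q c P' p' q' lam' ->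
  LeftLift (comp i c) (comp k c) (res Y f) (whiskerR eta c) <->
  LeftExt (comp (comp f p) p') q' (comp k c) (paste k lam' eta' p').
Proof.
  intros Hc Hcomma'.
  destruct (comma_typing Hcomma' Hq Hc) as (Hp' & Hq' & Hlam').
  destruct Hfc as (_ & _ & Hcommas).
  destruct (Hcommas (yon Y C) (comp i c)) as (P'' & p'' & q'' & lam'' & Hcomma'').
  { rewrite (proj2 Hy), (proj2 (is1cell_comp Hc Hi)); reflexivity. }
  erewrite comp_assoc_typed by typecheck.
  apply (LeftLift_iff_LeftExt (lam := paste i lam' lam p') Hy Hr Hf Hchi
           (is1cell_comp Hc Hi) (is1cell_comp Hp' Hp) Hq').
  - typecheck.
  - exact (chi_LeftLift Y HC Hf Hfa (is1cell_comp Hp' Hp)).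
  - exact (paste_LeftExt Hy Hi Hc Hcomma Hcomma' Hcomma''
             (yon_comma_LeftExt Y HC (is1cell_comp Hc Hi) Hcomma'')).
  - typecheck.
  - exact (transposes_paste Hy Hr Hf Hchi Hi Hc Hp Hq Hp' Hq' Hk Hlam Hlam' Ht).
Qed.

Lemma AbsLeftLift_iff_PointwiseLeftExt_yon (Hfc : finitely_complete K) :
  AbsLeftLift i k (res Y f) eta <-> PointwiseLeftExt (comp f p) q k eta'.
Proof.
  split.
  - intros Habs X c Hc P' p' q' lam' Hcomma'.
    rewrite (proj2 Hq) in Hc.
    apply (LeftLift_whisker_iff_LeftExt_paste Hfc Hc Hcomma'), Habs.
    rewrite (proj2 Hc), (proj1 Hk); reflexivity.
  - intros Hpw j Hj.
    assert (Hj' : is1cell j (dom j) M) by (split; [reflexivity | rewrite Hj; apply Hk]).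
    destruct (proj2 (proj2 Hfc) q j) as (P' & p' & q' & lam' & Hcomma').
    { rewrite (proj2 Hq), (proj2 Hj'); reflexivity. }
    apply (LeftLift_whisker_iff_LeftExt_paste Hfc Hj' Hcomma').
    refine (Hpw (dom j) j _ P' p' q' lam' Hcomma').
    rewrite (proj2 Hq); exact Hj'.
Qed.

End LiftingVersusExtension.

Theorem lemma3p13 (K : TwoCat) (Y : GoodYoneda K) (C M A P : Ob K)
  (i f k p q : Mor K) (lam eta eta' : Cell K) :
  finitely_complete K ->
  small Y C ->
  is1cell i M (PP Y C) -> is1cell f C A ->
  adm_ob Y M -> adm Y f ->
  is_comma (yon Y C) i P p q lam ->
  is1cell k M A ->
  is2cell eta i (comp (res Y f) k) ->
  is2cell eta' (comp f p) (comp k q) ->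
  vcomp (whiskerL (res Y f) eta') (whiskerR (chi Y f) p)
    = vcomp (whiskerR eta q) lam ->
  (LeftLift i k (res Y f) eta <-> LeftExt (comp f p) q k eta') /\
  (AbsLeftLift i k (res Y f) eta <-> PointwiseLeftExt (comp f p) q k eta').
Proof.
  intros Hfc [HC _] Hi Hf _ Hfa Hcomma Hk Heta Heta' E.
  pose proof (conj Heta (conj Heta' E)
    : transposes (res Y f) f i p q (chi Y f) lam k eta eta') as Ht.
  split.
  - exact (LeftLift_iff_LeftExt_yon Y HC Hi Hf Hfa Hk Hcomma Ht).
  - exact (AbsLeftLift_iff_PointwiseLeftExt_yon Y HC Hi Hf Hfa Hk Hcomma Ht Hfc).
Qed.
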